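(* Let $G$ be a digraph on $n$ vertices with $\delta^0(G)\geq n/2$. Let $d\geq0$ and suppose $A,B,S,T$ is a partition of $V(G)$ into sets of sizes $a,b,s,t$ with $t\geq s\geq d+2$ and $b=a+d$. Then $G$ contains a set $M$ of $d+1$ edges in $E(T,S\cup B)\cup E(B,S)$ such that the endvertices of edges of $M$ lying outside $B$ are all distinct (no vertex outside $B$ is an endvertex of two edges of $M$), and each vertex of $B$ is an endvertex of at most one edge of $M\cap E(T,B)$ and at most one edge of $M\cap E(B,S)$. Moreover, if $E(T,S)\neq\emptyset$, then $M$ contains an edge of $E(T,S)$.
   Context: Digraphs have no loops and at most one edge in each direction between two vertices; $\delta^0$ is the minimum semidegree (minimum of all in- and outdegrees). $E(X,Y)$ denotes the set of edges $xy$ of $G$ with $x\in X$ and $y\in Y$. *)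

From mathcomp Require Import all_boot.

Set Implicit Arguments. Unset Strict Implicit. Unset Printing Implicit Defensive.

(* A digraph on a finite vertex type V: an edge relation with no loops.
   Since it is a relation, there is at most one edge in each direction. *)
Definition loopless (V : finType) (G : rel V) : Prop := forall v, ~~ G v v.

Definition outdeg (V : finType) (G : rel V) (v : V) : nat := #|[set w | G v w]|.
Definition indeg  (V : finType) (G : rel V) (v : V) : nat := #|[set w | G w v]|.

(* delta^0(G) >= n/2, stated without division: 2 * deg >= n for all in/outdegrees *)
Definition min_semideg_half (V : finType) (G : rel V) : Prop :=
  forall v, #|V| <= 2 * outdeg G v /\ #|V| <= 2 * indeg G v.

Definition Eset (V : finType) (G : rel V) (X Y : {set V}) : {set V * V} :=
  [set e | [&& G e.1 e.2, e.1 \in X & e.2 \in Y]].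

Definition incident (V : finType) (M : {set V * V}) (x : V) : {set V * V} :=
  [set e in M | (e.1 == x) || (e.2 == x)].

Definition partition4 (V : finType) (A B S T : {set V}) : Prop :=
  [&& [disjoint A & B], [disjoint A & S], [disjoint A & T],
      [disjoint B & S], [disjoint B & T] & [disjoint S & T]] /\
  A :|: B :|: S :|: T = [set: V].

From mathcomp Require Import all_boot.
From mathcomp Require Import zify.

Set Implicit Arguments. Unset Strict Implicit. Unset Printing Implicit Defensive.

(* Call the edges of E(T, S u B) u E(B, S) admissible.  Since their tails lie in
   T u B and their heads in S u B, any set of admissible edges with pairwise
   distinct tails and pairwise distinct heads satisfies all the incidence
   requirements.  Take a maximum such M.  If |M| <= d + 1, some x in T is not a
   tail and some y in S is not a head; by maximality every admissible
   out-neighbour of x is a head of M, every admissible in-neighbour of y is a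
   tail of M, and no edge of M is of both kinds (it would close an augmenting
   path x -> . <- . -> y), so these neighbourhoods have at most |M| elements
   together.  All other neighbours of x and y lie in A u T and A u S, so
   d^+(x) + d^-(y) <= 2a + s + t - 2 + |M| < n, contradicting delta^0 >= n/2.
   Hence |M| >= d + 2, and this spare edge leaves room to exchange in an edge
   of E(T, S). *)

Lemma exists_subset_card (T : finType) (X : {set T}) k :
  k <= #|X| -> exists2 Y : {set T}, Y \subset X & #|Y| = k.
Proof.
move=> le_kX.
have /card_gt0P[Y] : 0 < #|[set Y : {set T} | Y \subset X & #|Y| == k]|.
  by rewrite cards_draws bin_gt0.
by rewrite inE => /andP[YX /eqP cardY]; exists Y.
Qed.

Lemma cardsU_disjoint (T : finType) (X Y : {set T}) :
  [disjoint X & Y] -> #|X :|: Y| = #|X| + #|Y|.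
Proof. by move=> dXY; rewrite -cardsUI disjoint_setI0 // cards0 addn0. Qed.

Section DigraphMatching.

Variable V : finType.
Implicit Types (E M N : {set V * V}) (u w x : V) (e : V * V).

Definition tails M := [set e.1 | e in M].
Definition heads M := [set e.2 | e in M].

(* A matching of the bipartite double cover of the digraph. *)
Definition matching M := (#|tails M| == #|M|) && (#|heads M| == #|M|).

Lemma matchingP M :
  reflect ({in M &, injective fst} /\ {in M &, injective snd}) (matching M).
Proof. exact: (andPP imset_injP imset_injP). Qed.

Lemma matching_subset M N : N \subset M -> matching M -> matching N.
Proof.
move=> NM /matchingP[inj1 inj2]; apply/matchingP.
by split=> e f eN fN; [apply: inj1 | apply: inj2]; apply: (subsetP NM).
Qed.

Lemma card_setU1_fresh M u w : u \notin tails M -> #|(u, w) |: M| = #|M|.+1.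
Proof.
move=> ut; rewrite cardsU1; suff -> : (u, w) \notin M by [].
by apply: contra ut => /(imset_f (fun e => e.1)).
Qed.

Lemma matching_setU1 M u w :
  matching M -> u \notin tails M -> w \notin heads M -> matching ((u, w) |: M).
Proof.
move=> /andP[/eqP tM /eqP hM] ut wh.
rewrite /matching /tails /heads !imsetU1 !cardsU1 -/(tails M) -/(heads M).
have uwM : (u, w) \notin M by apply: contra ut => /(imset_f (fun e => e.1)).
by rewrite (negbTE ut) (negbTE wh) uwM tM hM eqxx.
Qed.

Lemma matching_incident_le1 M x :
  matching M -> x \notin tails M :&: heads M -> #|incident M x| <= 1.
Proof.
move=> /matchingP[inj1 inj2] xTH; apply/card_le1_eqP => e f.
rewrite !inE => /andP[eM ex] /andP[fM fx].
have xtail g : g \in M -> g.1 = x -> x \in tails M by move=> gM <-; apply: imset_f.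
have xhead g : g \in M -> g.2 = x -> x \in heads M by move=> gM <-; apply: imset_f.
case/orP: ex => /eqP ex; case/orP: fx => /eqP fx.
- by apply: inj1; rewrite // ex fx.
- by move: xTH; rewrite inE (xtail e) // (xhead f).
- by move: xTH; rewrite inE (xtail f) // (xhead e).
- by apply: inj2; rewrite // ex fx.
Qed.

Lemma matching_exchange E M u w k :
  M \subset E -> matching M -> (u, w) \in E -> k.+2 <= #|M| ->
  exists M' : {set V * V},
    [/\ M' \subset E, matching M', (u, w) \in M' & #|M'| = k.+1].
Proof.
move=> ME mM uwE leM; have /matchingP[inj1 inj2] := mM.
have card_fiber_le1 (p : V * V -> V) z :
    {in M &, injective p} -> #|[set e in M | p e == z]| <= 1.
  move=> injp; apply/card_le1_eqP => e f.
  rewrite !inE => /andP[eM /eqP ez] /andP[fM /eqP fz].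
  by apply: injp; rewrite // ez fz.
set M1 := [set e in M | (e.1 != u) && (e.2 != w)].
have leM1 : k <= #|M1|.
  have : M \subset M1 :|: [set e in M | e.1 == u] :|: [set e in M | e.2 == w].
    by apply/subsetP => e eM; rewrite !inE eM; case: (e.1 == u); case: (e.2 == w).
  move/subset_leq_card; rewrite !cardsU.
  by have := card_fiber_le1 _ u inj1; have := card_fiber_le1 _ w inj2; lia.
have [Y YM1 cardY] := exists_subset_card leM1.
have YM : Y \subset M.
  by apply: subset_trans YM1 _; apply/subsetP => e; rewrite inE => /andP[].
have ut : u \notin tails Y.
  apply/imsetP => -[e /(subsetP YM1)]; rewrite inE => /and3P[_ eu _] ue.
  by rewrite ue eqxx in eu.
have wh : w \notin heads Y.
  apply/imsetP => -[e /(subsetP YM1)]; rewrite inE => /and3P[_ _ ew] we.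
  by rewrite we eqxx in ew.
exists ((u, w) |: Y); split.
- by rewrite subUset sub1set uwE (subset_trans YM ME).
- exact: matching_setU1 (matching_subset YM mM) ut wh.
- exact: setU11.
- by rewrite card_setU1_fresh // cardY.
Qed.

Section MaximumMatching.

Variables (E M : {set V * V}).
Hypotheses (ME : M \subset E) (mM : matching M)
  (maxM : forall N, N \subset E -> matching N -> #|N| <= #|M|).

Lemma max_matching_out_exposed u w :
  u \notin tails M -> (u, w) \in E -> w \in heads M.
Proof.
move=> ut uwE; apply/negPn/negP => wh.
have NE : (u, w) |: M \subset E by rewrite subUset sub1set uwE ME.
by have := maxM NE (matching_setU1 mM ut wh); rewrite card_setU1_fresh // ltnn.
Qed.

Lemma max_matching_in_exposed u w :
  w \notin heads M -> (u, w) \in E -> u \in tails M.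
Proof.
move=> wh uwE; apply/negPn/negP => ut.
have NE : (u, w) |: M \subset E by rewrite subUset sub1set uwE ME.
by have := maxM NE (matching_setU1 mM ut wh); rewrite card_setU1_fresh // ltnn.
Qed.

(* Otherwise [u -> e.2 <- e.1 -> w] would be an augmenting path. *)
Lemma max_matching_no_path3 u w e : u \notin tails M -> w \notin heads M ->
  e \in M -> (u, e.2) \in E -> (e.1, w) \in E -> False.
Proof.
move=> ut wh eM ue2E e1wE; have /matchingP[inj1 inj2] := mM.
set M0 := M :\ e; have sM0M : M0 \subset M := subD1set M e.
have e1t : e.1 \notin tails M0.
  apply/imsetP => -[f /setD1P[fe fM] /(inj1 _ _ eM fM) ef].
  by rewrite ef eqxx in fe.
have e2h : e.2 \notin heads M0.
  apply/imsetP => -[f /setD1P[fe fM] /(inj2 _ _ eM fM) ef].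
  by rewrite ef eqxx in fe.
have wh0 : w \notin heads M0 by apply: contra wh; apply/subsetP/imsetS.
have ut0 : u \notin tails M0 by apply: contra ut; apply/subsetP/imsetS.
set M1 := (e.1, w) |: M0.
have mM1 : matching M1 := matching_setU1 (matching_subset sM0M mM) e1t wh0.
have cardM1 : #|M1| = #|M| by rewrite card_setU1_fresh // [#|M|](cardsD1 e) eM.
have ut1 : u \notin tails M1.
  rewrite /tails imsetU1 in_setU1 negb_or ut0 andbT /=.
  by apply: contraNneq ut => ->; apply: imset_f.
have e2h1 : e.2 \notin heads M1.
  rewrite /heads imsetU1 in_setU1 negb_or e2h andbT /=.
  by apply: contraNneq wh => <-; apply: imset_f.
have NE : (u, e.2) |: M1 \subset E.
  by rewrite !subUset !sub1set ue2E e1wE (subset_trans sM0M ME).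
have := maxM NE (matching_setU1 mM1 ut1 e2h1).
by rewrite card_setU1_fresh // cardM1 ltnn.
Qed.

Lemma max_matching_degree_bound u w : u \notin tails M -> w \notin heads M ->
  #|[set v | (u, v) \in E]| + #|[set v | (v, w) \in E]| <= #|M|.
Proof.
move=> ut wh.
set X := [set e in M | (u, e.2) \in E]; set Y := [set e in M | (e.1, w) \in E].
have outX : [set v | (u, v) \in E] \subset heads X.
  apply/subsetP => v; rewrite inE => uvE.
  have /imsetP[e eM ev] := max_matching_out_exposed ut uvE.
  by rewrite ev; apply: imset_f; rewrite inE eM -ev.
have inY : [set v | (v, w) \in E] \subset tails Y.
  apply/subsetP => v; rewrite inE => vwE.
  have /imsetP[e eM ev] := max_matching_in_exposed wh vwE.
  by rewrite ev; apply: imset_f; rewrite inE eM -ev.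
have dXY : [disjoint X & Y].
  rewrite -setI_eq0 -subset0; apply/subsetP => e.
  rewrite !inE => /andP[/andP[eM ue2E] /andP[_ e1wE]].
  by case: (max_matching_no_path3 ut wh eM ue2E e1wE).
have XYM : X :|: Y \subset M.
  by apply/subsetP => e; rewrite !inE => /orP[]/andP[].
apply: leq_trans (leq_add (subset_leq_card outX) (subset_leq_card inY)) _.
apply: leq_trans (leq_add (leq_imset_card _ _) (leq_imset_card _ _)) _.
by rewrite -cardsU_disjoint // subset_leq_card.
Qed.

End MaximumMatching.

End DigraphMatching.

Section Proposition.

Variables (V : finType) (G : rel V) (A B S T : {set V}).
Hypotheses (loopG : loopless G) (partG : partition4 A B S T).
Implicit Types (X Y : {set V}) (M : {set V * V}).

Definition admissible : {set V * V} := Eset G T (S :|: B) :|: Eset G B S.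

Lemma card_partition4 : #|V| = #|A| + #|B| + #|S| + #|T|.
Proof.
case: partG => /and5P[dAB dAS dAT dBS /andP[dBT dST]] cover.
by rewrite -cardsT -cover !cardsU_disjoint // -setI_eq0 !setIUl !disjoint_setI0 ?setU0.
Qed.

Lemma outdeg_le_admissible x : x \in T ->
  outdeg G x <= #|A| + #|T :\ x| + #|[set v | (x, v) \in admissible]|.
Proof.
move=> xT; apply: (@leq_trans #|A :|: T :\ x :|: [set v | (x, v) \in admissible]|).
  apply/subset_leq_card/subsetP => v; rewrite inE => Gxv.
  have vx : v != x by apply: contraTneq Gxv => ->; apply: loopG.
  have : v \in [set: V] by []; rewrite -partG.2 !inE /= vx Gxv xT.
  by case: (v \in A); case: (v \in B); case: (v \in S); case: (v \in T).
apply: leq_trans (leq_card_setU _ _) _; rewrite leq_add2r; exact: leq_card_setU.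
Qed.

Lemma indeg_le_admissible y : y \in S ->
  indeg G y <= #|A| + #|S :\ y| + #|[set v | (v, y) \in admissible]|.
Proof.
move=> yS; apply: (@leq_trans #|A :|: S :\ y :|: [set v | (v, y) \in admissible]|).
  apply/subset_leq_card/subsetP => v; rewrite inE => Gvy.
  have vy : v != y by apply: contraTneq Gvy => ->; apply: loopG.
  have : v \in [set: V] by []; rewrite -partG.2 !inE /= vy Gvy yS.
  by case: (v \in A); case: (v \in B); case: (v \in S); case: (v \in T).
apply: leq_trans (leq_card_setU _ _) _; rewrite leq_add2r; exact: leq_card_setU.
Qed.

Lemma tailsI_heads_Eset X Y M :
  tails (M :&: Eset G X Y) :&: heads (M :&: Eset G X Y) \subset X :&: Y.
Proof.
apply: setISS; apply/subsetP => x /imsetP[e /setIP[_]].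
  by rewrite inE => /and3P[_ eX _] ->.
by rewrite inE => /and3P[_ _ eY] ->.
Qed.

Lemma tailsI_heads_admissible M :
  M \subset admissible -> tails M :&: heads M \subset B.
Proof.
case: partG => /and5P[_ _ _ _ /andP[_ dST]] _ ME.
apply/subsetP => _ /setIP[/imsetP[e eM ->] /imsetP[f fM ef]].
move: (subsetP ME e eM) (subsetP ME f fM); rewrite !inE ef.
case/orP => /and3P[_ fT _] // /orP[/and3P[_ _ /orP[fS | //]] | /and3P[_ _ fS]];
  by rewrite (disjointFl dST fT) in fS.
Qed.

Lemma exists_large_admissible_matching d :
  min_semideg_half G -> #|S| <= #|T| -> d + 2 <= #|S| -> #|B| = #|A| + d ->
  exists M : {set V * V}, [/\ M \subset admissible, matching M & d.+2 <= #|M|].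
Proof.
move=> degG leST; rewrite addn2 => leS cardB.
pose P (M : {set V * V}) := (M \subset admissible) && matching M.
have P0 : P set0 by rewrite /P sub0set /matching /tails /heads !imset0 !cards0.
have [M /andP[ME mM] maxM] := @arg_maxnP _ set0 P (fun M => #|M|) P0.
exists M; split => //; rewrite leqNgt; apply/negP => smallM.
have [x xT xt] : exists2 x, x \in T & x \notin tails M.
  apply/subsetPn; apply: contraTN smallM => /subset_leq_card leTt; rewrite -leqNgt.
  by rewrite (leq_trans leS) // (leq_trans leST) // (leq_trans leTt) ?leq_imset_card.
have [y yS yh] : exists2 y, y \in S & y \notin heads M.
  apply/subsetPn; apply: contraTN smallM => /subset_leq_card leSh; rewrite -leqNgt.
  by rewrite (leq_trans leS) // (leq_trans leSh) ?leq_imset_card.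
have maxM' (N : {set V * V}) : N \subset admissible -> matching N -> #|N| <= #|M|.
  by move=> NE mN; apply: maxM; rewrite /P NE.
have := max_matching_degree_bound ME mM maxM' xt yh.
have := outdeg_le_admissible xT; have := indeg_le_admissible yS.
have [dx _] := degG x; have [_ dy] := degG y.
have := cardsD1 x T; have := cardsD1 y S; have := card_partition4; rewrite xT yS.
lia.
Qed.

End Proposition.

Theorem proposition5p6 (V : finType) (G : rel V) (A B S T : {set V}) (d : nat) :
  loopless G ->
  min_semideg_half G ->
  partition4 A B S T ->
  #|S| <= #|T| -> d + 2 <= #|S| -> #|B| = #|A| + d ->
  exists M : {set V * V},
    [/\ #|M| = d.+1,
        M \subset Eset G T (S :|: B) :|: Eset G B S,
        (forall x, x \notin B -> #|incident M x| <= 1),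
        (forall v, v \in B ->
           #|incident (M :&: Eset G T B) v| <= 1 /\
           #|incident (M :&: Eset G B S) v| <= 1)
      & (Eset G T S != set0 -> M :&: Eset G T S != set0)].
Proof.
move=> loopG degG partG leST leS cardB.
have [M [ME mM leM]] :=
  exists_large_admissible_matching loopG partG degG leST leS cardB.
have [M' [M'E mM' cardM' TSM']] : exists M' : {set V * V},
    [/\ M' \subset admissible G B S T, matching M', #|M'| = d.+1
      & Eset G T S != set0 -> M' :&: Eset G T S != set0].
  have [TS0 | /set0Pn[[u w] uwTS]] := eqVneq (Eset G T S) set0.
    have [M' M'M cardM'] := exists_subset_card (ltnW leM).
    exists M'; split; rewrite ?TS0 ?eqxx //; first exact: subset_trans M'M ME.
    exact: matching_subset M'M mM.
  have uwE : (u, w) \in admissible G B S T.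
    by move: uwTS; rewrite !inE => /and3P[-> -> ->].
  have [M' [M'E mM' uwM' cardM']] := matching_exchange ME mM uwE leM.
  by exists M'; split => // _; apply/set0Pn; exists (u, w); apply/setIP.
have [/and5P[_ _ _ dBS /andP[dBT _]] _] := partG.
exists M'; split => //.
- move=> x xB; apply: matching_incident_le1 mM' _.
  by apply: contra xB; apply: (subsetP (tailsI_heads_admissible partG M'E)).
- move=> v vB.
  have le1_Eset X Y : v \notin X :&: Y -> #|incident (M' :&: Eset G X Y) v| <= 1.
    move=> vXY; apply: matching_incident_le1 (matching_subset (subsetIl _ _) mM') _.
    by apply: contra vXY; apply: (subsetP (tailsI_heads_Eset _ _ _ _)).
  split; apply: le1_Eset; rewrite inE.
  + by rewrite (disjointFr dBT vB).
  + by rewrite (disjointFr dBS vB) andbF.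
Qed.
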